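(* For $k\geq 0$ and $0\leq i\leq k+1$, $$f_{k+1,i}(x)=\sum_{j=0}^{i}(1+x)^{k+1-i}f_{k,j}(x)-f_{k,i}(x),$$ with initial conditions $f_{0,0}(x)=1$ and $f_{k,i}(x)=0$ for $k<i$.
   Context: An inversion sequence of length $n$ is $e=e_1\ldots e_n$ with $0\le e_i<i$. $\mathrm{asc}(e_1\ldots e_i)=|\{\ell\in[i-1]:e_\ell<e_{\ell+1}\}|$. An ascent sequence is an inversion sequence with $e_{i+1}\le \mathrm{asc}(e_1\ldots e_i)+1$ for all $i$; it is primitive if $e_i\ne e_{i+1}$ for all $i$. Let $\mathcal{PA}$ be the set of primitive ascent sequences of all lengths $\geq1$. For primitive $e$, partition $e$ into maximal strictly decreasing consecutive blocks (runs); an entry is a tail if it is the last (smallest) entry of its run. Define $\mathrm{wt}(e)=\prod_{i=1}^{\mathrm{len}(e)}\mathrm{wt}(e_i)$ with $\mathrm{wt}(e_i)=1$ if $e_i$ is a tail and $\mathrm{wt}(e_i)=x$ otherwise. A sequence avoids $\underline{12}0$ if there are no indices $2\le i<j$ with $e_j<e_{i-1}<e_i$. Let $\mathcal{PA}_{k,i}(\underline{12}0)$ be the set of $\underline{12}0$-avoiding $e\in\mathcal{PA}$ with $\mathrm{asc}(e)=k$ and last entry equal to $i$, and $f_{k,i}(x)=\sum_{e\in\mathcal{PA}_{k,i}(\underline{12}0)}\mathrm{wt}(e)$. *)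

(* Sequences are seq nat, 0-indexed: e = e_1 ... e_n is
   represented by [:: e_1; ...; e_n], so nth 0 e j = e_{j+1}. *)
From HB Require Import structures.
From mathcomp Require Import all_boot all_order all_algebra.
Set Implicit Arguments. Unset Strict Implicit. Unset Printing Implicit Defensive.
Import GRing.Theory.
Local Open Scope ring_scope.

Definition is_inversion (e : seq nat) : bool :=
  all (fun j => (nth 0%N e j <= j)%N) (iota 0 (size e)).

Definition asc (e : seq nat) : nat :=
  count (fun p : nat * nat => (p.1 < p.2)%N) (zip e (behead e)).

Definition is_ascent (e : seq nat) : bool :=
  is_inversion e &&
  all (fun i => (nth 0%N e i <= (asc (take i e)).+1)%N) (iota 1 (size e).-1).

Definition is_primitive (e : seq nat) : bool :=
  all (fun j => nth 0%N e j != nth 0%N e j.+1) (iota 0 (size e).-1).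

(* the entry at (0-based) position j is a tail: last entry of its maximal
   strictly decreasing consecutive run *)
Definition is_tail (e : seq nat) (j : nat) : bool :=
  (j.+1 == size e) || ~~ (nth 0%N e j.+1 < nth 0%N e j)%N.

Definition wt (e : seq nat) : {poly int} :=
  \prod_(j < size e) (if is_tail e j then 1 else 'X).

Definition avoids120 (e : seq nat) : bool :=
  ~~ has (fun a => has (fun b =>
          (nth 0%N e b < nth 0%N e a.-1 < nth 0%N e a)%N)
        (iota a.+1 (size e - a.+1))) (iota 1 (size e).-1).

Definition inPA (k i : nat) (e : seq nat) : bool :=
  [&& (0 < size e)%N, is_ascent e, is_primitive e, avoids120 e,
      asc e == k & last 0%N e == i].

Definition seq_of_ffun n (g : {ffun 'I_n -> 'I_n}) : seq nat :=
  [seq (val (g j)) | j <- enum 'I_n].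

(* Sum of weights over the sequences of PA_{k,i}(12_0) of length n.
   Every inversion sequence of length n is seq_of_ffun g for exactly one g. *)
Definition f_len (k i n : nat) : {poly int} :=
  \sum_(g : {ffun 'I_n -> 'I_n} | inPA k i (seq_of_ffun g) && is_inversion (seq_of_ffun g))
     wt (seq_of_ffun g).

(* A primitive ascent sequence with asc = k has entries <= k+1 and consists
   of k+1 strictly decreasing runs, hence has length <= (k+1)(k+2) < (k+2)^2.
   So summing over lengths n < (k+2)^2 covers all of PA_{k,i}(12_0). *)
Definition f (k i : nat) : {poly int} :=
  \sum_(n < (k.+2 ^ 2)%N) f_len k i n.

From HB Require Import structures.
From mathcomp Require Import all_boot all_order all_algebra zify ring.
Import GRing.Theory.

(* A sequence in PA_{k+1,i}(12_0) splits uniquely as [p ++ r], where [p] is in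
   PA_{k,j}(12_0) for some [j] and [r] is its final run: a nonempty strictly
   decreasing sequence with first entry above [j] and all entries in [j, k+1]
   (an entry below [j] would complete a 12_0 with the last ascent, one above
   [k+1] would violate the ascent condition).  Conversely every such
   concatenation is admissible, and [r] contributes [x ^ (size r - 1)] to the
   weight.  A run ending at [i] is [i] preceded by an arbitrary decreasing
   sequence of entries in [i+1, k+1], nonempty when [i = j]; summing over them
   gives [(1+x)^(k+1-i)] if [j < i] and [(1+x)^(k+1-i) - 1] if [j = i], which
   is the recurrence.  As [f] sums over all inversion sequences of bounded
   length, it is compared with an explicit duplicate-free enumeration of
   PA_k(12_0) built along this decomposition; its members have length at most
   [(k+1)^2]. *)

Set Implicit Arguments.
Unset Strict Implicit.
Unset Printing Implicit Defensive.

Lemma asc_cons2 x y s : asc [:: x, y & s] = (x < y) + asc (y :: s).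
Proof. by []. Qed.

Lemma asc_rcons e v : e != [::] -> asc (rcons e v) = asc e + (last 0 e < v).
Proof.
case: e => // x e _; elim: e x => [|y e IHe] x; first by rewrite /asc /=; case: (x < v).
by rewrite rcons_cons !asc_cons2 IHe addnA.
Qed.

Lemma asc_lt_size e : e != [::] -> asc e < size e.
Proof.
case: e => // x e _; apply: leq_ltn_trans (count_size _ _) _.
by rewrite size_zip /=; lia.
Qed.

Lemma iota_rcons m n : iota m n.+1 = rcons (iota m n) (m + n).
Proof. by rewrite -addn1 iotaD cats1. Qed.

Lemma is_inversion_rcons e v :
  is_inversion (rcons e v) = is_inversion e && (v <= size e).
Proof.
rewrite /is_inversion size_rcons iota_rcons all_rcons nth_rcons ltnn eqxx andbC.
congr andb; apply: eq_in_all => j; rewrite mem_iota /= => lt_j_e.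
by rewrite nth_rcons lt_j_e.
Qed.

Lemma is_ascent_rcons e v : e != [::] ->
  is_ascent (rcons e v) = is_ascent e && (v <= (asc e).+1).
Proof.
move=> e_nil; have [n size_e] : exists n, size e = n.+1.
  by case: (e) e_nil => // ? s; exists (size s).
rewrite /is_ascent is_inversion_rcons size_rcons size_e iota_rcons /= all_rcons add1n.
rewrite nth_rcons size_e ltnn eqxx -cats1 takel_cat ?size_e // -size_e take_size.
rewrite (eq_in_all (a2 := fun i => nth 0 e i <= (asc (take i e)).+1)).
  have [le_v|_] := leqP v (asc e).+1; last by rewrite !andbF.
  by rewrite (leq_trans le_v (asc_lt_size e_nil)) /= !andbT.
move=> j; rewrite mem_iota add1n -size_e => /andP[_ lt_j_e].
by rewrite nth_cat lt_j_e takel_cat // ltnW.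
Qed.

Lemma is_primitive_rcons e v : e != [::] ->
  is_primitive (rcons e v) = is_primitive e && (last 0 e != v).
Proof.
move=> e_nil; have [n size_e] : exists n, size e = n.+1.
  by case: (e) e_nil => // ? s; exists (size s).
rewrite /is_primitive size_rcons size_e iota_rcons all_rcons andbC.
rewrite !nth_rcons size_e ltnn eqxx leqnn -(nth_last 0) size_e; congr andb.
apply: eq_in_all => j; rewrite mem_iota add0n => /andP[_ lt_j_n].
by rewrite !nth_rcons size_e !ltnS lt_j_n ltnW.
Qed.

Definition extends120 (e : seq nat) (v : nat) : bool :=
  ~~ has (fun a => v < nth 0 e a.-1 < nth 0 e a) (iota 1 (size e).-1).

Lemma avoids120_rcons e v : e != [::] ->
  avoids120 (rcons e v) = avoids120 e && extends120 e v.
Proof.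
move=> e_nil; have [n size_e] : exists n, size e = n.+1.
  by case: (e) e_nil => // ? s; exists (size s).
rewrite /avoids120 /extends120 size_rcons size_e iota_rcons.
rewrite has_rcons add1n subnn /= -negb_or -has_predU; congr negb.
apply: eq_in_has => a; rewrite mem_iota add1n => /andP[a_gt0 lt_a_n].
rewrite subSn // iota_rcons has_rcons subnKC // !nth_rcons size_e ltnn eqxx.
rewrite lt_a_n (leq_ltn_trans (leq_pred a) lt_a_n) orbC /=.
congr orb; apply: eq_in_has => b; rewrite mem_iota subnKC // => /andP[_ lt_b_n].
by rewrite nth_rcons size_e lt_b_n.
Qed.

Lemma extends120_rcons e u v : e != [::] ->
  extends120 (rcons e u) v = extends120 e v && ~~ (v < last 0 e < u).
Proof.
move=> e_nil; have [n size_e] : exists n, size e = n.+1.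
  by case: (e) e_nil => // ? s; exists (size s).
rewrite /extends120 size_rcons size_e iota_rcons has_rcons negb_or add1n.
rewrite !nth_rcons size_e ltnn eqxx leqnn -(nth_last 0) size_e andbC.
congr (~~ _ && _); apply: eq_in_has => a; rewrite mem_iota add1n => /andP[a_gt0 lt_a_n].
by rewrite !nth_rcons size_e lt_a_n (leq_ltn_trans (leq_pred a) lt_a_n).
Qed.

Lemma extends120_mono e u v : u <= v -> extends120 e u -> extends120 e v.
Proof.
move=> le_uv; apply: contra; apply: sub_has => a /andP[lt_v lt_a].
by rewrite lt_a andbT (leq_ltn_trans le_uv).
Qed.

Definition pa120 (e : seq nat) : bool :=
  [&& 0 < size e, is_ascent e, is_primitive e & avoids120 e].

Lemma pa120_neq0 e : pa120 e -> e != [::].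
Proof. by case: e. Qed.

Lemma pa120_1 v : pa120 [:: v] = (v == 0).
Proof.
by rewrite /pa120 /is_ascent /is_inversion /is_primitive /avoids120 /= leqn0 !andbT.
Qed.

Lemma pa120_inversion e : pa120 e -> is_inversion e.
Proof. by case/and4P=> _ /andP[]. Qed.

Lemma is_inversion_lt e : is_inversion e -> all (gtn (size e)) e.
Proof.
move=> e_inv; apply/(all_nthP 0) => j lt_je.
have le_ej : nth 0 e j <= j by apply: (allP e_inv); rewrite mem_iota add0n.
exact: leq_ltn_trans le_ej lt_je.
Qed.

Lemma pa120_rcons e v : e != [::] ->
  pa120 (rcons e v) = pa120 e && [&& v <= (asc e).+1, last 0 e != v & extends120 e v].
Proof.
move=> e_nil; rewrite /pa120 size_rcons is_ascent_rcons // is_primitive_rcons //.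
rewrite avoids120_rcons // (_ : 0 < size e); last by case: (e) e_nil.
by case: is_ascent; case: is_primitive; case: avoids120; case: (v <= _); case: (_ != v).
Qed.

Lemma pa120_last_le e : pa120 e -> last 0 e <= (asc e).+1.
Proof.
case/lastP: e => // e v; have [-> | e_nil] := eqVneq e [::].
  by rewrite pa120_1 => /eqP->.
rewrite pa120_rcons // last_rcons asc_rcons // => /andP[_ /andP[le_v _]].
by rewrite (leq_trans le_v) // ltnS leq_addr.
Qed.

Lemma pa120_extends_last e : pa120 e -> extends120 e (last 0 e).
Proof.
case/lastP: e => // e v; have [-> //| e_nil] := eqVneq e [::].
rewrite pa120_rcons // extends120_rcons // last_rcons => /and4P[_ _ _ -> /=].
by apply/negP => /andP[/ltn_trans lt_v /lt_v]; rewrite ltnn.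
Qed.

(** * Decomposition at the last ascent *)

Lemma pa120_cat_decr q d w :
  pa120 q -> extends120 q w -> path gtn (last 0 q) d -> all (leq w) d ->
  [&& pa120 (q ++ d), asc (q ++ d) == asc q & extends120 (q ++ d) w].
Proof.
elim: d q => [|u d IHd] q q_pa q_w; first by rewrite cats0 q_pa eqxx q_w.
rewrite /= -cat_rcons => /andP[lt_u d_path] /andP[le_wu d_w].
have q_nil := pa120_neq0 q_pa; rewrite /gtn /= in lt_u.
have not_asc : (last 0 q < u) = false by rewrite ltnNge ltnW.
have qu_pa : pa120 (rcons q u).
  rewrite pa120_rcons // q_pa (leq_trans (ltnW lt_u) (pa120_last_le q_pa)).
  by rewrite neq_ltn lt_u orbT (extends120_mono le_wu q_w).
have qu_w : extends120 (rcons q u) w by rewrite extends120_rcons // q_w not_asc andbF.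
have := IHd _ qu_pa qu_w; rewrite last_rcons => /(_ d_path d_w) /and3P[-> /eqP-> ->].
by rewrite asc_rcons // not_asc addn0 eqxx.
Qed.

Definition is_run (j m : nat) (r : seq nat) : bool :=
  [&& r != [::], sorted gtn r, all (fun x => j <= x <= m) r & j < head 0 r].

Lemma pa120_cat_run p r :
  pa120 p -> is_run (last 0 p) (asc p).+1 r ->
  pa120 (p ++ r) && (asc (p ++ r) == (asc p).+1).
Proof.
move=> p_pa; case: r => [|h d] // /and4P[_ /= d_path /andP[/andP[le_ph le_h] d_in] lt_ph].
have p_nil := pa120_neq0 p_pa; have p_last := pa120_extends_last p_pa.
have ph_pa : pa120 (rcons p h).
  by rewrite pa120_rcons // p_pa le_h neq_ltn lt_ph (extends120_mono le_ph p_last).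
have ph_last : extends120 (rcons p h) (last 0 p) by rewrite extends120_rcons // p_last ltnn.
have d_ge : all (leq (last 0 p)) d by apply: sub_all d_in => x /andP[].
have := pa120_cat_decr (d := d) ph_pa ph_last; rewrite last_rcons => /(_ d_path d_ge).
by rewrite cat_rcons => /and3P[-> /eqP-> _]; rewrite asc_rcons // lt_ph /= addn1.
Qed.

Lemma is_run_rcons j m r v : is_run j m r -> j <= v < last 0 r -> is_run j m (rcons r v).
Proof.
case: r => [|h r] // /and4P[_ r_path r_in lt_jh] /andP[le_jv lt_v].
have /andP[_ le_last] := allP r_in _ (mem_last h r).
move: r_path r_in lt_jh lt_v; rewrite /is_run rcons_cons /= rcons_path all_rcons.
by move=> -> /andP[-> ->] -> lt_v /=; rewrite le_jv lt_v (leq_trans (ltnW lt_v)).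
Qed.

Lemma extends120_cat p r v : p != [::] -> r != [::] ->
  extends120 (p ++ r) v -> last 0 p < head 0 r -> last 0 p <= v.
Proof.
rewrite -!size_eq0 -!lt0n => p_gt0 r_gt0 p_v lt_pr; rewrite leqNgt.
apply: contraL p_v => lt_v; rewrite negbK; apply/hasP; exists (size p).
  by rewrite mem_iota size_cat p_gt0 add1n prednK ?addn_gt0 ?p_gt0 // -addn1 leq_add2l.
by rewrite !nth_cat ltnn subnn nth0 ltn_predL p_gt0 nth_last lt_v.
Qed.

Lemma pa120_decomp e : pa120 e -> e = [:: 0] \/
  exists p r, [/\ pa120 p, e = p ++ r, asc e = (asc p).+1 & is_run (last 0 p) (asc p).+1 r].
Proof.
elim/last_ind: e => // e v IHe; have [-> | e_nil] := eqVneq e [::].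
  by rewrite pa120_1 => /eqP->; left.
rewrite pa120_rcons // => /andP[e_pa /and3P[le_v ne_v e_v]]; right.
case: (ltngtP (last 0 e) v) => [lt_v | gt_v | eq_v]; last by rewrite eq_v eqxx in ne_v.
  exists e, [:: v]; rewrite cats1 asc_rcons // lt_v addn1.
  by split; rewrite // /is_run /= (ltnW lt_v) le_v lt_v.
have [E | [p [r [p_pa E asc_e r_run]]]] := IHe e_pa; first by rewrite E in gt_v.
case/and4P: (r_run) => r_nil _ _ lt_pr.
have last_r : last 0 e = last 0 r by rewrite E last_cat; case: (r) r_nil.
have le_pv : last 0 p <= v.
  by rewrite E in e_v; apply: extends120_cat (pa120_neq0 p_pa) r_nil e_v lt_pr.
exists p, (rcons r v); rewrite -rcons_cat -E asc_rcons // ltnNge (ltnW gt_v) addn0.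
by split=> //; apply: is_run_rcons; rewrite // le_pv -last_r.
Qed.

Lemma cat_run_inj p r p' r' m m' : p ++ r = p' ++ r' ->
  is_run (last 0 p) m r -> is_run (last 0 p') m' r' -> p = p' /\ r = r'.
Proof.
wlog le_pp' : p r p' r' m m' / size p <= size p'.
  move=> wlog_le E run_r run_r'; have [le | /ltnW le] := leqP (size p) (size p').
    exact: wlog_le E run_r run_r'.
  by have [-> ->] := wlog_le _ _ _ _ _ _ le (esym E) run_r' run_r.
move=> E /and4P[_ r_sorted _ _] /and4P[r'_nil _ _ lt_r'].
have [t p'E] : exists t, p' = p ++ t.
  exists (drop (size p) p'); rewrite -{1}(cat_take_drop (size p) p'); congr (_ ++ _).
  by have := congr1 (take (size p)) E; rewrite take_size_cat // takel_cat.
have E_r : r = t ++ r'.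
  by have := congr1 (drop (size p)) E; rewrite p'E -catA !drop_size_cat.
subst p' r; clear E le_pp'; case: t => [|a t] in lt_r' r_sorted *; first by rewrite cats0.
rewrite last_cat /= in lt_r'; rewrite /= cat_path in r_sorted.
by case: r' r'_nil lt_r' r_sorted => // b r' _ /= /ltn_trans lt_b /and3P[_ /lt_b]; rewrite ltnn.
Qed.

Fixpoint decr_seqs (lo n : nat) : seq (seq nat) :=
  if n is n'.+1 then decr_seqs lo n' ++ [seq (lo + n') :: s | s <- decr_seqs lo n']
  else [:: [::]].

Lemma mem_decr_seqs lo n s :
  (s \in decr_seqs lo n) = sorted gtn s && all (fun x => lo <= x < lo + n) s.
Proof.
elim: n s => [|n IHn] s /=.
  by case: s => [|x s]; rewrite ?inE //= addn0 andbCA; case: leqP.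
rewrite mem_cat IHn; case: s => [|x t] //=; rewrite (path_sortedE (rev_trans ltn_trans)).
have widen t' : all (fun y => lo <= y < lo + n) t' -> all (fun y => lo <= y < lo + n.+1) t'.
  by apply: sub_all => y /andP[-> /ltnW]; rewrite addnS.
apply/idP/idP.
  case/orP=> [/and3P[-> /andP[-> lt_x] /widen t_in] | /mapP[t' t'_in [-> ->]]].
    by rewrite t_in addnS ltnS ltnW.
  move: t'_in; rewrite IHn leq_addr ltn_add2l ltnSn => /andP[-> t'_in] /=.
  by rewrite (widen _ t'_in) !andbT; apply: sub_all t'_in => y /andP[].
case/and3P=> /andP[lt_t t_sorted] /andP[le_x]; rewrite addnS ltnS leq_eqVlt.
have t_lt y : y \in t -> y < x by move/(allP lt_t).
case/orP=> [/eqP x_max | lt_x] t_in; apply/orP; [right | left].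
  apply/mapP; exists t; last by rewrite x_max.
  rewrite IHn t_sorted /=.
  by apply/allP => y y_t; have /andP[-> _] := allP t_in y y_t; rewrite -x_max t_lt.
rewrite lt_t t_sorted le_x lt_x /=; apply/allP => y y_t.
by have /andP[-> _] := allP t_in y y_t; rewrite (ltn_trans (t_lt y y_t)).
Qed.

Lemma uniq_decr_seqs lo n : uniq (decr_seqs lo n).
Proof.
elim: n => //= n IHn; rewrite cat_uniq IHn map_inj_uniq ?IHn //=; last by move=> ? ? [].
by rewrite andbT; apply/hasPn => _ /mapP[s _ ->]; rewrite mem_decr_seqs /= ltnn !andbF.
Qed.

Lemma size_decr_seqs lo n s : s \in decr_seqs lo n -> size s <= n.
Proof.
elim: n s => [|n IHn] s /=; first by rewrite inE => /eqP->.
by rewrite mem_cat => /orP[/IHn/leqW | /mapP[t /IHn le_t ->]].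
Qed.

Lemma sorted_rcons_gtn s i : sorted gtn (rcons s i) = sorted gtn s && all (ltn i) s.
Proof.
rewrite -[in LHS](revK s) -rev_cons rev_sorted /= (path_sortedE ltn_trans) all_rev.
by rewrite rev_sorted andbC.
Qed.

(* [rcons s i] is a run ending at [i]; its head exceeds [j] unless [s] is empty
   and [i = j]. *)
Definition runs (j m : nat) : seq (seq nat) :=
  [seq rcons s i | i <- index_iota j m.+1,
                   s <- [seq s <- decr_seqs i.+1 (m - i) | (j < i) || (s != [::])]].

Lemma mem_runs j m r : (r \in runs j m) = is_run j m r.
Proof.
have head_gt i s : j <= i -> all (ltn i) s -> (j < head i s) = (j < i) || (s != [::]).
  by move=> le_ji; case: s => [|h s] /=; rewrite ?orbF ?orbT // => /andP[/(leq_ltn_trans le_ji)].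
apply/allpairsPdep/idP => [[i [s [i_in s_in ->]]] | ].
  move: i_in s_in; rewrite mem_index_iota mem_filter mem_decr_seqs => /andP[le_ji le_im].
  case/and3P=> s_head s_sorted s_in.
  have s_gt : all (ltn i) s by apply: sub_all s_in => y /andP[].
  rewrite /is_run -size_eq0 size_rcons sorted_rcons_gtn s_sorted s_gt all_rcons le_ji.
  rewrite -ltnS le_im [in head _ _]headI /= head_gt // s_head andbT.
  apply: sub_all s_in => y /andP[lt_iy]; rewrite addSn subnKC // ltnS => ->.
  by rewrite andbT (leq_trans le_ji (ltnW lt_iy)).
case/lastP: r => [|s i] /and4P[//= _]; rewrite sorted_rcons_gtn all_rcons [in head _ _]headI /=.
case/andP=> s_sorted s_gt /andP[/andP[le_ji le_im] s_in].
rewrite head_gt // => s_head; exists i, s; split=> //.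
  by rewrite mem_index_iota le_ji ltnS.
rewrite mem_filter mem_decr_seqs s_head s_sorted /=; apply/allP => y y_s.
have /andP[_ le_ym] := allP s_in y y_s.
by rewrite addSn subnKC // ltnS le_ym andbT; apply: (allP s_gt).
Qed.

Lemma uniq_runs j m : uniq (runs j m).
Proof.
apply: allpairs_uniq_dep => [||[i s] [i' s'] _ _ /rcons_inj[-> ->] //].
  exact: iota_uniq.
by move=> i _; rewrite filter_uniq ?uniq_decr_seqs.
Qed.

Lemma size_runs j m r : r \in runs j m -> size r <= m.+1.
Proof.
case/allpairsPdep=> i [s [_ s_in ->]]; rewrite mem_filter in s_in.
by rewrite size_rcons ltnS (leq_trans (size_decr_seqs (proj2 (andP s_in)))) ?leq_subr.
Qed.

Fixpoint pa120_seqs (k : nat) : seq (seq nat) :=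
  if k is k'.+1 then [seq p ++ r | p <- pa120_seqs k', r <- runs (last 0 p) k]
  else [:: [:: 0]].

Lemma mem_pa120_seqs k e : (e \in pa120_seqs k) = pa120 e && (asc e == k).
Proof.
elim: k e => [|k IHk] e /=.
  rewrite inE; apply/eqP/andP => [-> // | [e_pa /eqP asc_e]].
  by have [// | [p [r [_ _ asc_pr _]]]] := pa120_decomp e_pa; rewrite asc_pr in asc_e.
apply/allpairsPdep/andP => [[p [r [p_in r_in ->]]] | [e_pa /eqP asc_e]].
  rewrite IHk in p_in; case/andP: p_in => p_pa /eqP asc_p.
  by rewrite -asc_p; apply/andP/pa120_cat_run; rewrite // -mem_runs asc_p.
have [E | [p [r [p_pa E asc_pr r_run]]]] := pa120_decomp e_pa; first by rewrite E in asc_e.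
have asc_p : asc p = k by apply: succn_inj; rewrite -asc_pr.
by exists p, r; rewrite IHk p_pa asc_p eqxx mem_runs -asc_p.
Qed.

Lemma uniq_pa120_seqs k : uniq (pa120_seqs k).
Proof.
elim: k => //= k IHk; apply: allpairs_uniq_dep => // [p _ | ]; first exact: uniq_runs.
move=> [p r] [p' r'] /allpairsPdep[q [t [_ t_in [-> ->]]]].
move=> /allpairsPdep[q' [t' [_ t'_in [-> ->]]]] /= E.
move: t_in t'_in; rewrite !mem_runs => t_run t'_run.
by have [-> ->] := cat_run_inj E t_run t'_run.
Qed.

Lemma size_pa120_seqs k e : e \in pa120_seqs k -> size e <= k.+1 ^ 2.
Proof.
elim: k e => [|k IHk] e; first by rewrite inE => /eqP->.
case/allpairsPdep=> p [r [/IHk le_p /size_runs le_r ->]]; rewrite size_cat; nia.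
Qed.

Lemma last_pa120_seqs k e : e \in pa120_seqs k -> last 0 e <= k.
Proof.
case: k => [|k]; first by rewrite inE => /eqP->.
case/allpairsPdep=> p [r [_ + ->]]; rewrite mem_runs last_cat.
by case: r => // h r /and4P[_ _ /allP/(_ _ (mem_last h r))/andP[]].
Qed.

(** * Weights and the recurrence *)

Local Open Scope ring_scope.

Lemma sum_partition_ord (V : nmodType) (T : Type) (P : pred T) (h : T -> nat)
    (s : seq T) (F : T -> V) n :
  \sum_(j < n) \sum_(x <- s | P x && (h x == j)) F x = \sum_(x <- s | P x && (h x < n)%N) F x.
Proof.
under eq_bigr do rewrite big_mkcond.
rewrite exchange_big [RHS]big_mkcond; apply: eq_bigr => x _.
rewrite -big_mkcond; case: (P x) => /=; last by rewrite big_pred0.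
by under eq_bigl do rewrite eq_sym; rewrite (big_ord1_eq _ (fun=> F x)).
Qed.

Lemma wt_rcons e v : e != [::] ->
  wt (rcons e v) = wt e * (if (v < last 0 e)%N then 'X else 1).
Proof.
move=> e_nil; have [n size_e] : exists n, size e = n.+1.
  by case: (e) e_nil => // ? s; exists (size s).
have wtE s : wt s = \prod_(0 <= j < size s) (if is_tail s j then 1 else 'X).
  by rewrite /wt big_mkord.
rewrite !wtE size_rcons size_e !big_nat_recr //= -!mulrA; congr (_ * _).
  apply: eq_big_nat => j /andP[_ lt_jn]; rewrite /is_tail size_rcons size_e !nth_rcons size_e.
  by rewrite !ltnS lt_jn (ltnW lt_jn) !eqSS (ltn_eqF lt_jn) (ltn_eqF (leqW lt_jn)).
rewrite /is_tail size_rcons size_e !nth_rcons size_e ltnn !eqxx ltnSn /= mulr1.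
by rewrite (ltn_eqF (ltnSn _)) -(nth_last 0) size_e /= mul1r; case: (v < _)%N.
Qed.

Lemma wt_cat_decr p d : p != [::] -> path gtn (last 0 p) d ->
  wt (p ++ d) = wt p * 'X ^+ size d.
Proof.
elim: d p => [|u d IHd] p p_nil /=; first by rewrite cats0 mulr1.
case/andP=> lt_u d_path; rewrite /gtn /= in lt_u.
have pu_nil : rcons p u != [::] by rewrite -size_eq0 size_rcons.
by rewrite -cat_rcons IHd ?last_rcons // wt_rcons // lt_u exprS mulrA.
Qed.

Lemma wt_cat_run p m r : p != [::] -> is_run (last 0 p) m r ->
  wt (p ++ r) = wt p * 'X ^+ (size r).-1.
Proof.
case: r => [|h d] // p_nil /and4P[_ d_path _ /= lt_ph].
have ph_nil : rcons p h != [::] by rewrite -size_eq0 size_rcons.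
rewrite -cat_rcons wt_cat_decr ?last_rcons // wt_rcons //.
by rewrite ltnNge (ltnW lt_ph) mulr1.
Qed.

Section DecreasingSums.

Variables (R : pzRingType) (x : R).

Lemma sum_decr_seqs lo n : \sum_(s <- decr_seqs lo n) x ^+ size s = (1 + x) ^+ n.
Proof.
elim: n => [|n IHn] /=; first by rewrite big_seq1 expr0.
rewrite big_cat big_map /=; under [X in _ + X]eq_bigr do rewrite exprS.
by rewrite -big_distrr /= IHn exprS mulrDl mul1r.
Qed.

Lemma sum_decr_seqs_neq0 lo n :
  \sum_(s <- decr_seqs lo n | s != [::]) x ^+ size s = (1 + x) ^+ n - 1.
Proof.
elim: n => [|n IHn] /=; first by rewrite big_cons big_nil expr0 subrr.
rewrite big_cat big_map /= IHn; under [X in _ + X]eq_bigr do rewrite exprS.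
by rewrite -big_distrr /= sum_decr_seqs exprS mulrDl mul1r addrAC.
Qed.

Lemma sum_runs_last j m i : (i <= m)%N ->
  \sum_(r <- runs j m | last 0 r == i) x ^+ (size r).-1
    = (j <= i)%:R * (1 + x) ^+ (m - i) - (j == i)%:R.
Proof.
move=> le_im; rewrite big_mkcond big_allpairs_dep /=.
rewrite (eq_bigr (fun i' => if i' == i then
    \sum_(s <- decr_seqs i'.+1 (m - i') | (j < i')%N || (s != [::])) x ^+ size s else 0)).
  rewrite -big_mkcond big_nat1_eq ltnS le_im andbT.
  case: (ltngtP j i) => [lt_ji | gt_ji | <-].
  - by rewrite /= sum_decr_seqs mul1r subr0.
  - by rewrite mul0r subr0.
  - by rewrite /= sum_decr_seqs_neq0 mul1r.
move=> i' _; rewrite big_filter; under eq_bigr do rewrite last_rcons size_rcons.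
by case: eqP => // _; rewrite big1.
Qed.

End DecreasingSums.

Definition f_enum (k i : nat) : {poly int} :=
  \sum_(e <- pa120_seqs k | last 0 e == i) wt e.

Lemma sum_f_enum_le k i :
  \sum_(j < i.+1) f_enum k j = \sum_(e <- pa120_seqs k | (last 0 e <= i)%N) wt e.
Proof. exact: (sum_partition_ord xpredT). Qed.

Lemma sum_wt_cat_runs p m i : p != [::] -> (i <= m)%N ->
  \sum_(r <- runs (last 0 p) m | last 0 (p ++ r) == i) wt (p ++ r)
    = wt p * ((last 0 p <= i)%:R * (1 + 'X) ^+ (m - i) - (last 0 p == i)%:R).
Proof.
move=> p_nil le_im; rewrite -sum_runs_last // big_distrr /=.
rewrite !(big_seq_cond (fun r => _ == i)); apply: eq_big => [r | r /andP[r_in _]].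
  by case r_in: (r \in _) => //=; move: r_in; rewrite mem_runs last_cat; case: r.
by rewrite (@wt_cat_run _ m) // -mem_runs.
Qed.

Lemma f_enum_rec k i : (i <= k.+1)%N ->
  f_enum k.+1 i = \sum_(j < i.+1) (1 + 'X) ^+ (k.+1 - i) * f_enum k j - f_enum k i.
Proof.
move=> le_ik; have p_nil p : p \in pa120_seqs k -> p != [::].
  by rewrite mem_pa120_seqs => /andP[/pa120_neq0].
rewrite /f_enum [pa120_seqs _]/= big_mkcond big_allpairs_dep.
under eq_big_seq => p p_in do rewrite -big_mkcond (sum_wt_cat_runs (p_nil p p_in) le_ik).
rewrite -big_distrr /= sum_f_enum_le big_distrr /=.
rewrite [X in X - _]big_mkcond [X in _ - X]big_mkcond -sumrB; apply: eq_bigr => e _.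
by case: leqP; case: eqP => _ _ /=; ring.
Qed.

(** * Comparison with the sum over finite functions *)

Definition ffun_seqs n : seq (seq nat) :=
  map (@seq_of_ffun n) (index_enum {ffun 'I_n -> 'I_n}).

Lemma uniq_ffun_seqs n : uniq (ffun_seqs n).
Proof.
rewrite map_inj_uniq ?index_enum_uniq // => g g' /eq_in_map gg'.
by apply/ffunP => j; apply/val_inj/gg'; rewrite mem_enum.
Qed.

Lemma mem_ffun_seqs n s : (s \in ffun_seqs n) = (size s == n) && all (gtn n) s.
Proof.
apply/mapP/andP => [[g _ ->] | [/eqP size_s s_lt]].
  rewrite /seq_of_ffun size_map size_enum_ord; split=> //.
  by apply/allP => _ /mapP[j _ ->]; apply: ltn_ord.
have lt_s (j : 'I_n) : (nth 0 s j < n)%N by apply: (allP s_lt); rewrite mem_nth ?size_s.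
exists [ffun j => Ordinal (lt_s j)]; first by rewrite mem_index_enum.
rewrite /seq_of_ffun -[LHS](mkseq_nth 0) size_s /mkseq -val_enum_ord -map_comp.
by apply: eq_map => j; rewrite /= ffunE.
Qed.

Lemma inPAE k i e : inPA k i e = [&& pa120 e, asc e == k & last 0 e == i].
Proof. by rewrite /inPA /pa120 -!andbA. Qed.

Lemma f_enumE k i : f k i = f_enum k i.
Proof.
have -> : f_enum k i = \sum_(e <- pa120_seqs k | (last 0 e == i) && (size e < k.+2 ^ 2)%N) wt e.
  rewrite /f_enum big_seq_cond [RHS]big_seq_cond; apply: eq_bigl => e.
  case e_in: (e \in _); rewrite //= (leq_ltn_trans (size_pa120_seqs e_in)) ?andbT //.
  by rewrite ltn_sqr.
rewrite /f -[RHS](sum_partition_ord (fun e => last 0 e == i) size).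
apply: eq_bigr => n _.
rewrite /f_len -(big_map (@seq_of_ffun n) (fun s => inPA k i s && is_inversion s) wt).
rewrite -/(ffun_seqs n) -[LHS]big_filter -[RHS]big_filter; apply/perm_big/uniq_perm.
- by rewrite filter_uniq ?uniq_ffun_seqs.
- by rewrite filter_uniq ?uniq_pa120_seqs.
move=> s; rewrite !mem_filter mem_ffun_seqs mem_pa120_seqs inPAE.
case s_pa: (pa120 s); rewrite ?andbF //= (pa120_inversion s_pa) andbT.
have [<- | _] := eqVneq (size s) n; last by rewrite !andbF.
by rewrite (is_inversion_lt (pa120_inversion s_pa)) !andbT andbC.
Qed.

Theorem lemma2p2 :
  (forall k i : nat, (i <= k.+1)%N ->
     f k.+1 i = \sum_(j < i.+1) (1 + 'X) ^+ (k.+1 - i) * f k j - f k i)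
  /\ f 0 0 = 1
  /\ (forall k i : nat, (k < i)%N -> f k i = 0).
Proof.
split; [|split].
- move=> k i le_ik; rewrite f_enumE f_enum_rec //.
  by under [in RHS]eq_bigr do rewrite f_enumE; rewrite f_enumE.
- by rewrite f_enumE /f_enum big_cons big_nil /= addr0 /wt big_ord1.
- move=> k i lt_ki; rewrite f_enumE /f_enum big_seq_cond big1 // => e.
  case/andP=> /last_pa120_seqs le_ek /eqP last_e.
  by have := leq_ltn_trans le_ek lt_ki; rewrite last_e ltnn.
Qed.
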